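(* Let $I\in\mathbb{I}_{m,n}$ and let $J\in\mathrm{Cov}(I)$. Then $\#J_0=\#I_0+1$. Consequently $\mathbb{I}_{m,n}$ is a graded poset with rank function $I\mapsto \#I_0$.
   Context: Fix a field $K$. For integers $m,n\ge1$, $G_{m,n}$ is the equioriented commutative $m\times n$ grid: the quiver with vertex set $\{(i,j):1\le i\le m,\ 1\le j\le n\}$ and arrows $(i,j)\to(i,j+1)$ and $(i,j)\to(i+1,j)$, bound by all commutativity relations. An interval of $G_{m,n}$ is a nonempty full subquiver $I$ which is connected (as an undirected graph) and convex (whenever $x,y\in I_0$ and there are paths $x\to z$ and $z\to y$ in $G_{m,n}$, then $z\in I_0$); $I_0$ denotes its vertex set. $\mathbb{I}_{m,n}$ is the set of intervals, partially ordered by $I\le J\iff I_0\subseteq J_0$. $\mathrm{Cov}(I)$ is the set of $J\in\mathbb{I}_{m,n}$ covering $I$, i.e. $I<J$ and there is no interval strictly between $I$ and $J$. *)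

From mathcomp Require Import all_boot.
Set Implicit Arguments. Unset Strict Implicit. Unset Printing Implicit Defensive.

(* Vertices of G_{m,n}: (i,j) with 0 <= i < m, 0 <= j < n (0-indexed). *)
Definition vertex (m n : nat) : finType := ('I_m * 'I_n)%type.

Definition arrow (m n : nat) : rel (vertex m n) :=
  fun x y =>
    ((nat_of_ord x.1 == nat_of_ord y.1) && (nat_of_ord y.2 == (nat_of_ord x.2).+1))
    || ((nat_of_ord x.2 == nat_of_ord y.2) && (nat_of_ord y.1 == (nat_of_ord x.1).+1)).

Definition path_to (m n : nat) (x y : vertex m n) : bool := connect (@arrow m n) x y.

Definition adj_in (m n : nat) (A : {set vertex m n}) : rel (vertex m n) :=
  fun x y => [&& x \in A, y \in A & (arrow x y || arrow y x)].

Definition is_interval (m n : nat) (A : {set vertex m n}) : Prop :=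
  [/\ A != set0,
      (forall x y, x \in A -> y \in A -> connect (adj_in A) x y)
    & (forall x y z, x \in A -> y \in A -> path_to x z -> path_to z y -> z \in A)].

Definition covers (m n : nat) (I J : {set vertex m n}) : Prop :=
  [/\ is_interval J, I \proper J
    & ~ (exists K : {set vertex m n}, [/\ is_interval K, I \proper K & K \proper J])].

From mathcomp Require Import all_boot.
Set Implicit Arguments. Unset Strict Implicit. Unset Printing Implicit Defensive.

(* If J covers I, pick an arrow leaving I inside J and, among the vertices of
   J \ I reachable from I along arrows, one x of minimal rank i + j.  Then x is
   adjacent to I and I + x is still convex, hence an interval with
   I < I + x <= J; by the covering property I + x = J.  Arrows entering I are
   handled by the same argument on the opposite quiver. *)

Definition convex (T : finType) (e : rel T) (A : {set T}) :=
  forall x y z, x \in A -> y \in A -> connect e x z -> connect e z y -> z \in A.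

Lemma convex_flip (T : finType) (e : rel T) (A : {set T}) :
  convex [rel x y | e y x] A <-> convex e A.
Proof.
by split=> cvxA x y z xA yA; rewrite !connect_rev => xz zy; apply: (cvxA y x z).
Qed.

Lemma flip_rank (T : finType) (e : rel T) (r : T -> nat) :
    (forall x y, e x y -> r x < r y) ->
  forall x y, [rel x y | e y x] x y -> \max_z r z - r x < \max_z r z - r y.
Proof.
move=> e_rank x y /= /e_rank lt_yx.
exact: ltn_sub2l (leq_trans lt_yx (leq_bigmax x)) lt_yx.
Qed.

Section ConnectFacts.
Variables (T : finType) (e : rel T).

Lemma connect_exit (A : {set T}) a b :
  connect e a b -> a \in A -> b \notin A ->
  exists u v, [/\ u \in A, v \notin A & e u v].
Proof.
move/connectP=> [p pth ->]; elim: p a pth => [|z p IH] a /=; first by move=> _ ->.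
move=> /andP[az pz] aA lastA; case zA : (z \in A); first exact: IH pz zA lastA.
by exists a, z; rewrite zA.
Qed.

Lemma connect_last_step a x :
  connect e a x -> a != x -> exists2 y, connect e a y & e y x.
Proof.
move/connectP=> [p pth ->]; case/lastP: p pth => [|q y]; first by rewrite eqxx.
rewrite last_rcons rcons_path => /andP[pq ey] _.
by exists (last a q) => //; apply/connectP; exists q.
Qed.

End ConnectFacts.

Section ConvexExtension.
Variables (T : finType) (e : rel T) (r : T -> nat).
Hypothesis e_rank : forall x y, e x y -> r x < r y.

Lemma connect_rank x y : connect e x y -> x != y -> r x < r y.
Proof.
move/connectP=> [p pth ->]; elim: p x pth => [|z p IH] x /=; first by rewrite eqxx.
move=> /andP[xz pz] _; have := e_rank xz.
by case: (eqVneq z (last z p)) => [<- //| /(IH z pz) lt_z lt_x]; apply: ltn_trans lt_x lt_z.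
Qed.

Variables I J : {set T}.
Hypotheses (cvxI : convex e I) (cvxJ : convex e J) (sIJ : I \subset J).

Definition reached_outside :=
  [pred x | [&& x \in J, x \notin I & [exists b in I, connect e b x]]].

Section MinimalRank.
Variable x : T.
Hypotheses (x_out : reached_outside x)
           (x_min : forall z, reached_outside z -> r x <= r z).

Lemma between_min_rank u z :
  u \in I -> connect e u z -> connect e z x -> z \notin I -> z = x.
Proof.
move=> uI uz zx zI; apply/eqP; apply: contraT => zNx.
have out_z : reached_outside z.
  have /and3P[xJ _ _] := x_out.
  rewrite /= zI (cvxJ (subsetP sIJ u uI) xJ uz zx).
  by apply/existsP; exists u; rewrite uI.
by have := x_min out_z; rewrite leqNgt connect_rank.
Qed.

Lemma convex_setU1_min_rank : convex e (x |: I).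
Proof.
have /and3P[_ xI /existsP[b /andP[bI bx]]] := x_out.
move=> u v z; rewrite !inE => /predU1P[-> | uI] /predU1P[-> | vI] uz zv.
- apply/predU1P; left; apply/eqP; apply: contraT => zNx.
  have xNz : x != z by rewrite eq_sym.
  by have := ltn_trans (connect_rank uz xNz) (connect_rank zv zNx); rewrite ltnn.
- by case/negP: xI; apply: (cvxI bI vI bx); apply: connect_trans uz zv.
- case zI : (z \in I); first by rewrite orbT.
  by rewrite (between_min_rank uI uz zv) ?zI ?eqxx.
- by rewrite (cvxI uI vI uz zv) orbT.
Qed.

Lemma min_rank_pred : exists2 y, y \in I & e y x.
Proof.
have /and3P[_ xI /existsP[b /andP[bI bx]]] := x_out.
have bNx : b != x by apply: contraNneq xI => <-.
have [y by_ yx] := connect_last_step bx bNx.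
exists y => //; apply: contraT => yI.
have y_x := between_min_rank bI by_ (connect1 yx) yI.
by have := e_rank yx; rewrite y_x ltnn.
Qed.

End MinimalRank.

Lemma convex_extension a x0 :
  a \in I -> x0 \in J -> x0 \notin I -> connect e a x0 ->
  exists x, [/\ x \in J, x \notin I, convex e (x |: I) & exists2 y, y \in I & e y x].
Proof.
move=> aI x0J x0I ax0.
have out_x0 : reached_outside x0.
  by rewrite /= x0J x0I; apply/existsP; exists a; rewrite aI.
have [x out_x x_min] := arg_minnP r out_x0.
have /and3P[xJ xI _] := out_x.
exists x; split=> //; [exact: convex_setU1_min_rank | exact: min_rank_pred].
Qed.

End ConvexExtension.

Lemma arrow_rank m n (x y : vertex m n) : arrow x y -> x.1 + x.2 < y.1 + y.2.
Proof. by case/orP=> /andP[/eqP-> /eqP->]; rewrite ?addnS ?addSn. Qed.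

Lemma grid_convex_extension m n (I J : {set vertex m n}) u v :
  convex (@arrow m n) I -> convex (@arrow m n) J -> I \subset J ->
  u \in I -> v \in J -> v \notin I -> arrow u v || arrow v u ->
  exists x, [/\ x \in J, x \notin I, convex (@arrow m n) (x |: I)
              & exists2 y, y \in I & arrow y x || arrow x y].
Proof.
move=> cvxI cvxJ sIJ uI vJ vI /orP[uv | vu].
  have [x [xJ xI cvxK [y yI yx]]] :=
    convex_extension (@arrow_rank m n) cvxI cvxJ sIJ uI vJ vI (connect1 uv).
  by exists x; split=> //; exists y; rewrite ?yx.
have flip_uv : connect [rel x y | arrow y x] u v by apply: connect1.
have [x [xJ xI /convex_flip cvxK [y yI xy]]] :=
  convex_extension (flip_rank (@arrow_rank m n)) ((convex_flip _ _).2 cvxI)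
    ((convex_flip _ _).2 cvxJ) sIJ uI vJ vI flip_uv.
by exists x; split=> //; exists y; last by apply/orP; right.
Qed.

Lemma interval_setU1 m n (I : {set vertex m n}) x y :
  is_interval I -> y \in I -> arrow y x || arrow x y ->
  convex (@arrow m n) (x |: I) -> is_interval (x |: I).
Proof.
move=> [_ connI _] yI yx cvxK; split=> //; first by apply/set0Pn; exists x; rewrite setU11.
have sub : subrel (adj_in I) (connect (adj_in (x |: I))).
  by move=> u v /and3P[uI vI uv]; apply: connect1; rewrite /adj_in !inE uI vI uv !orbT.
have symK : connect_sym (adj_in (x |: I)).
  by apply: sym_connect_sym => u v; rewrite /adj_in andbCA orbC.
have xy : connect (adj_in (x |: I)) x y.
  by apply: connect1; rewrite /adj_in !inE eqxx yI orbT /= orbC.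
move=> u v; rewrite !inE => /predU1P[-> | uI] /predU1P[-> | vI].
- exact: connect0.
- exact: connect_trans xy (connect_sub sub (connI y v yI vI)).
- by rewrite symK; apply: connect_trans xy (connect_sub sub (connI y u yI uI)).
- exact: (connect_sub sub (connI u v uI vI)).
Qed.

Lemma covers_max m n (I J K : {set vertex m n}) :
  covers I J -> is_interval K -> I \proper K -> K \subset J -> K = J.
Proof.
move=> [_ _ noK] intK ltIK sKJ; apply/eqP; rewrite eqEproper sKJ /=.
by apply: contraT => /negbNE ltKJ; case: noK; exists K.
Qed.

Theorem mainTheorem2 (m n : nat) (hm : 0 < m) (hn : 0 < n)
    (I J : {set vertex m n}) :
  is_interval I -> covers I J -> #|J| = #|I| + 1.
Proof.
move=> intI covIJ; have [[_ connJ cvxJ] ltIJ _] := covIJ.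
have [/set0Pn[a aI] _ cvxI] := intI.
have [sIJ [b bJ bI]] := properP ltIJ.
have [u [v [uI vI /and3P[_ vJ uv]]]] :=
  connect_exit (connJ a b (subsetP sIJ a aI) bJ) aI bI.
have [x [xJ xI cvxK [y yI yx]]] := grid_convex_extension cvxI cvxJ sIJ uI vJ vI uv.
have ltIK : I \proper x |: I by rewrite properUr // sub1set.
have sKJ : x |: I \subset J by rewrite subUset sub1set xJ sIJ.
rewrite -(covers_max covIJ (interval_setU1 intI yI yx cvxK) ltIK sKJ).
by rewrite cardsU1 xI addnC.
Qed.
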